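(* Let $S\colon\{0,1\}^n\to\{0,1\}^n$ be a polynomial-size circuit that is a YES instance of \textsc{Succinct Graph Reachability}, and let $V$, $\mathrm{Enc}$, $\ell=\ell(n)$, $p=p(n)$, $\sigma^{\mathsf{start}}$, $\sigma^{\mathsf{goal}}$ be as described in the context. Then there exists a reconfiguration sequence $\sigma$ from $\sigma^{\mathsf{start}}$ to $\sigma^{\mathsf{goal}}$ over $\{0,1,\bot\}^{2\ell(n)+p(n)}$ such that $V(S)$ accepts every proof in $\sigma$ with probability $1$.
   Context: \textsc{Succinct Graph Reachability}: given a polynomial-size circuit $S\colon\{0,1\}^n\to\{0,1\}^n$ with $S(1^n)=1^n$, decide whether there is a sequence $(\alpha^{(1)},\ldots,\alpha^{(T)})$ in $\{0,1\}^n$ from $0^n$ to $1^n$ such that for all $t<T$: $\alpha^{(t)}=\alpha^{(t+1)}$ or $S(\alpha^{(t)})=\alpha^{(t+1)}$ or $S(\alpha^{(t+1)})=\alpha^{(t)}$; YES instances are those where such a sequence exists. For strings $f,g$ of equal length, $\Delta(f,g)$ is the fraction of positions where they differ; for a set $A$, $\Delta(f,A)=\min_{g\in A}\Delta(f,g)$; $f$ is $\epsilon$-close to $A$ if $\Delta(f,A)\le\epsilon$ and $\epsilon$-far otherwise. $\bot$ is a symbol distinct from $0,1$; $\circ$ denotes concatenation; $f|_I$ denotes the restriction of $f$ to positions $I$. Setting: $\mathrm{Enc}\colon\{0,1\}^n\to\{0,1\}^{\ell(n)}$, $\ell(n)=n^{1+o(1)}$, is an error-correcting code with relative distance $\rho\in(0,1)$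 (i.e. $\Delta(\mathrm{Enc}(\alpha),\mathrm{Enc}(\beta))>\rho$ for $\alpha\ne\beta$), with set of codewords $\mathrm{Enc}(\cdot)$, having a local tester $M$: a probabilistic polynomial-time algorithm making $O(1)$ nonadaptive queries to $f\in\{0,1\}^{\ell(n)}$ that always accepts codewords and rejects every $f$ with probability at least $\kappa\cdot\Delta(f,\mathrm{Enc}(\cdot))$ (for a constant $\kappa>0$); when run on a string over $\{0,1,\bot\}$, $M$ rejects whenever it reads $\bot$. Let $L_{\mathrm{ckt}}(S)=\{\mathrm{Enc}(\alpha)\circ\mathrm{Enc}(\beta) : \alpha=\beta \text{ or } S(\alpha)=\beta \text{ or } S(\beta)=\alpha\}$. Let $V_{\mathrm{ckt}}$ be a smooth PCP-of-proximity verifier for the pair language $\{(S,f\circ g): f\circ g\in L_{\mathrm{ckt}}(S)\}$ with $O(\log n)$ randomness, query complexity $q$, proximity parameter $\rho/4$, soundness error $s_{\mathrm{ckt}}\in(0,1)$, and proof length $p(n)$: on explicit input $S$ it generates a query tuple $I$ into $f\circ g\circ\pi$ and a circuit $D$; if $f\circ g\in L_{\mathrm{ckt}}(S)$ some proof $\pi$ is accepted with probability $1$; if $f\circ g$ is $(\rho/4)$-far from $L_{\mathrm{ckt}}(S)$, every $\pi$ is accepted with probability $<s_{\mathrm{ckt}}$; and every position of $f\circ g\circ\pi$ is queried with the same probability. For $\mathrm{Enc}(\alpha)\circ\mathrm{Enc}(\beta)\in L_{\mathrm{ckt}}(S)$, $\Pi(\alpha,\beta)\in\{0,1\}^{p(n)}$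 is a (polynomial-time computable) proof such that $V_{\mathrm{ckt}}(S)$ accepts $\mathrm{Enc}(\alpha)\circ\mathrm{Enc}(\beta)\circ\Pi(\alpha,\beta)$ with probability $1$. Verifier $V(S)$ with oracle access to $f\circ g\circ\pi\in\{0,1,\bot\}^{\ell(n)}\times\{0,1,\bot\}^{\ell(n)}\times\{0,1,\bot\}^{p(n)}$: (1) run $M$ on $f$ and on $g$; if both runs reject, reject. (2) Pick $i,j\in\{1,\ldots,\ell(n)\}$ independently and uniformly. If $f_i=\bot$ or $g_j=\bot$, accept. (3) Otherwise, run $V_{\mathrm{ckt}}(S)$ to obtain $(I,D)$; if $(f\circ g)|_I$ contains $\bot$, accept; else if $\pi|_I$ contains no $\bot$ and $D((f\circ g\circ\pi)|_I)=1$, accept; otherwise reject. Define $\sigma^{\mathsf{start}}=\mathrm{Enc}(0^n)\circ\mathrm{Enc}(0^n)\circ\Pi(0^n,0^n)$ and $\sigma^{\mathsf{goal}}=\mathrm{Enc}(1^n)\circ\mathrm{Enc}(1^n)\circ\Pi(1^n,1^n)$. A reconfiguration sequence over $\{0,1,\bot\}^N$ from $\sigma^{\mathsf{start}}$ to $\sigma^{\mathsf{goal}}$ is a finite sequence of strings in $\{0,1,\bot\}^N$ starting at $\sigma^{\mathsf{start}}$, ending at $\sigma^{\mathsf{goal}}$, with consecutive strings differing in at most one position. *)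

From HB Require Import structures.
From mathcomp Require Import all_boot all_order all_algebra.
Set Implicit Arguments. Unset Strict Implicit. Unset Printing Implicit Defensive.
Import Order.TTheory GRing.Theory Num.Theory.
Local Open Scope ring_scope.

Definition bits (n : nat) := {ffun 'I_n -> bool}.
Definition zeros (n : nat) : bits n := [ffun => false].
Definition ones (n : nat) : bits n := [ffun => true].

Definition sgr_step n (S : bits n -> bits n) (a b : bits n) : bool :=
  [|| a == b, S a == b | S b == a].

Definition SGR_yes n (S : bits n -> bits n) : Prop :=
  exists s : seq (bits n), path (sgr_step S) (zeros n) s && (last (zeros n) s == ones n).

(* Positions of f o g o pi: 2l + p positions, f-part, g-part, pi-part. *)
Definition pos (l p : nat) : finType := ('I_l + 'I_l + 'I_p)%type.
Definition fgpos (l : nat) : finType := ('I_l + 'I_l)%type.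

Definition cat2 (T : Type) l (f g : {ffun 'I_l -> T}) : {ffun fgpos l -> T} :=
  [ffun x : fgpos l => match x with inl i => f i | inr j => g j end].

Definition cat3 (T : Type) l p (f g : {ffun 'I_l -> T}) (pi : {ffun 'I_p -> T})
  : {ffun pos l p -> T} :=
  [ffun x : pos l p => match x with
                       | inl (inl i) => f i
                       | inl (inr j) => g j
                       | inr k => pi k end].

Definition is_fg l p (x : pos l p) : bool := if x is inl _ then true else false.
Definition is_pi l p (x : pos l p) : bool := ~~ is_fg x.

(* Strings over {0,1,bot}: None stands for bot. *)
Definition embed (T : finType) (w : {ffun T -> bool}) : {ffun T -> option bool} :=
  [ffun x => Some (w x)].

Definition reldist (R : numFieldType) (T : finType) (f g : {ffun T -> bool}) : R :=
  #|[set x | f x != g x]|%:R / #|T|%:R.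

Definition prob (R : numFieldType) (Om : finType) (E : pred Om) : R :=
  #|[set w | E w]|%:R / #|Om|%:R.

Definition is_code (R : realFieldType) n l (Enc : bits n -> bits l) (rho : R) : Prop :=
  0 < rho < 1 /\ forall a b : bits n, a != b -> rho < reldist R (Enc a) (Enc b).

(* Delta(f, Enc(.)) : minimum over all codewords (all distances are <= 1). *)
Definition dist_code (R : realFieldType) n l (Enc : bits n -> bits l) (f : bits l) : R :=
  \big[Order.min/1]_(a : bits n) reldist R f (Enc a).

Definition M_acc_bin l rM (MQ : bits rM -> seq 'I_l) (MD : bits rM -> seq bool -> bool)
  (f : bits l) (r : bits rM) : bool :=
  MD r (map f (MQ r)).

Definition M_acc l rM (MQ : bits rM -> seq 'I_l) (MD : bits rM -> seq bool -> bool)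
  (f : {ffun 'I_l -> option bool}) (r : bits rM) : bool :=
  all (fun i => f i != None) (MQ r) && MD r (map (fun i => odflt false (f i)) (MQ r)).

Definition is_local_tester (R : realFieldType) n l rM (Enc : bits n -> bits l)
  (kappa : R) (MQ : bits rM -> seq 'I_l) (MD : bits rM -> seq bool -> bool) : Prop :=
  0 < kappa /\
  (forall a : bits n, prob R (M_acc_bin MQ MD (Enc a)) = 1) /\
  (forall f : bits l, kappa * dist_code R Enc f <= prob R (fun r => ~~ M_acc_bin MQ MD f r)).

Definition Vckt_acc l p rV (VI : bits rV -> seq (pos l p)) (VD : bits rV -> seq bool -> bool)
  (w : {ffun pos l p -> bool}) (r : bits rV) : bool :=
  VD r (map w (VI r)).

Definition dist_Lckt (R : realFieldType) n l (S : bits n -> bits n) (Enc : bits n -> bits l)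
  (fg : {ffun fgpos l -> bool}) : R :=
  \big[Order.min/1]_(ab : bits n * bits n | sgr_step S ab.1 ab.2)
     reldist R fg (cat2 (Enc ab.1) (Enc ab.2)).

Definition in_Lckt n l (S : bits n -> bits n) (Enc : bits n -> bits l)
  (fg : {ffun fgpos l -> bool}) : Prop :=
  exists a b : bits n, sgr_step S a b /\ fg = cat2 (Enc a) (Enc b).

Definition is_smooth_pcpp (R : realFieldType) n l p q rV (S : bits n -> bits n)
  (Enc : bits n -> bits l) (rho s_ckt : R)
  (VI : bits rV -> seq (pos l p)) (VD : bits rV -> seq bool -> bool) : Prop :=
  [/\
      forall r, size (VI r) = q,
      0 < s_ckt < 1,
      (forall (f g : bits l), in_Lckt S Enc (cat2 f g) ->
         exists pi : bits p, prob R (Vckt_acc VI VD (cat3 f g pi)) = 1),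
      (forall (f g : bits l) (pi : bits p), rho / 4%:R < dist_Lckt R S Enc (cat2 f g) ->
         prob R (Vckt_acc VI VD (cat3 f g pi)) < s_ckt)
    &
      (forall x y : pos l p,
         prob R (fun r => x \in VI r) = prob R (fun r => y \in VI r))].

Definition is_pcpp_proof (R : realFieldType) n l p rV (S : bits n -> bits n)
  (Enc : bits n -> bits l) (VI : bits rV -> seq (pos l p))
  (VD : bits rV -> seq bool -> bool) (Pi : bits n -> bits n -> bits p) : Prop :=
  forall a b : bits n, sgr_step S a b ->
    prob R (Vckt_acc VI VD (cat3 (Enc a) (Enc b) (Pi a b))) = 1.

Definition V_acc l p rM rV (MQ : bits rM -> seq 'I_l) (MD : bits rM -> seq bool -> bool)
  (VI : bits rV -> seq (pos l p)) (VD : bits rV -> seq bool -> bool)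
  (w : {ffun pos l p -> option bool})
  (om : bits rM * bits rM * ('I_l * 'I_l * bits rV)) : bool :=
  let: (r1, r2, (i, j, r3)) := om in
  let f : {ffun 'I_l -> option bool} := [ffun x => w (inl (inl x))] in
  let g : {ffun 'I_l -> option bool} := [ffun x => w (inl (inr x))] in
  if ~~ M_acc MQ MD f r1 && ~~ M_acc MQ MD g r2 then false
  else if (f i == None) || (g j == None) then true
  else let I := VI r3 in
    if has (fun x => is_fg x && (w x == None)) I then true
    else all (fun x => is_pi x ==> (w x != None)) I
         && VD r3 (map (fun x => odflt false (w x)) I).

Definition V_prob (R : realFieldType) l p rM rV (MQ : bits rM -> seq 'I_l)
  (MD : bits rM -> seq bool -> bool)
  (VI : bits rV -> seq (pos l p)) (VD : bits rV -> seq bool -> bool)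
  (w : {ffun pos l p -> option bool}) : R :=
  prob R (V_acc MQ MD VI VD w).

Definition adj (T : finType) (a b : {ffun T -> option bool}) : bool :=
  (#|[set x | a x != b x]| <= 1)%N.

Definition sigma_start n l p (Enc : bits n -> bits l) (Pi : bits n -> bits n -> bits p)
  : {ffun pos l p -> option bool} :=
  embed (cat3 (Enc (zeros n)) (Enc (zeros n)) (Pi (zeros n) (zeros n))).

Definition sigma_goal n l p (Enc : bits n -> bits l) (Pi : bits n -> bits n -> bits p)
  : {ffun pos l p -> option bool} :=
  embed (cat3 (Enc (ones n)) (Enc (ones n)) (Pi (ones n) (ones n))).

From HB Require Import structures.
From mathcomp Require Import all_boot all_order all_algebra.
Set Implicit Arguments. Unset Strict Implicit. Unset Printing Implicit Defensive.
Import Order.TTheory GRing.Theory Num.Theory.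
Local Open Scope ring_scope.

(* Walk along the SGR path 0^n = a_0 ~ a_1 ~ ... ~ a_T = 1^n and move from
   (Enc a, Enc a, Pi(a,a)) to (Enc b, Enc b, Pi(b,b)) across an edge a ~ b
   through (Enc a, bot, Pi(a,a)), (Enc a, bot, Pi(a,b)), (Enc a, Enc b, Pi(a,b)),
   (bot, Enc b, Pi(a,b)), (bot, Enc b, Pi(b,b)), rewriting one block at a time,
   one position at a time.  Throughout, one of f, g is a full codeword, so the
   tester never rejects on both; and either one of f, g is entirely bot, so
   step (2) accepts, or the non-bot positions agree with an honest PCPP proof
   for an edge, so step (3) accepts by completeness. *)

Section Reconfiguration.

Variable T : finType.

Definition mixture (V : Type) (w w' u : {ffun T -> V}) : Prop :=
  forall x, u x = w x \/ u x = w' x.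

Definition erasure_of (v u : {ffun T -> option bool}) : Prop :=
  forall x, u x = v x \/ u x = None.

Definition blank : {ffun T -> option bool} := [ffun => None].

Definition reconf (P : {ffun T -> option bool} -> Prop) (w w' : {ffun T -> option bool})
  : Prop :=
  exists s, [/\ path (fun a b => adj a b) w s, last w s = w' & forall u, u \in w :: s -> P u].

Lemma mixture_id (V : Type) (v u : {ffun T -> V}) : mixture v v u -> u = v.
Proof. by move=> vu; apply/ffunP => x; case: (vu x). Qed.

Lemma erasure_ofxx v : erasure_of v v.
Proof. by left. Qed.

Lemma erasure_of_blank v : erasure_of v blank.
Proof. by right; rewrite ffunE. Qed.

Lemma mixture_erasure v w w' u :
  erasure_of v w -> erasure_of v w' -> mixture w w' u -> erasure_of v u.
Proof. by move=> vw vw' wu x; case: (wu x) => ->; [apply: vw | apply: vw']. Qed.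

Definition interpolate (w w' : {ffun T -> option bool}) (k : nat) : {ffun T -> option bool} :=
  [ffun x => if (enum_rank x < k)%N then w' x else w x].

Lemma interpolate_adj w w' k : adj (interpolate w w' k) (interpolate w w' k.+1).
Proof.
have rank_eq x : interpolate w w' k x != interpolate w w' k.+1 x -> enum_rank x = k :> nat.
  rewrite !ffunE ltnS (leq_eqVlt (enum_rank x)).
  by case: (enum_rank x =P k :> nat) => //= _; rewrite eqxx.
apply/card_le1_eqP => x y; rewrite !inE => /rank_eq rx /rank_eq ry.
by apply: enum_rank_inj; apply: ord_inj; rewrite rx ry.
Qed.

Lemma interpolate_path w w' m k :
  path (fun a b => adj a b) (interpolate w w' k) (map (interpolate w w') (iota k.+1 m)).
Proof. by elim: m k => [|m IH] k //=; rewrite interpolate_adj IH. Qed.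

Lemma interpolate_last w w' m k :
  last (interpolate w w' k) (map (interpolate w w') (iota k.+1 m)) = interpolate w w' (k + m).
Proof. by elim: m k => [|m IH] k /=; rewrite ?addn0 // IH addSnnS. Qed.

Lemma reconf_mixture P w w' : (forall u, mixture w w' u -> P u) -> reconf P w w'.
Proof.
move=> mixP.
have w0 : interpolate w w' 0 = w by apply/ffunP => x; rewrite ffunE ltn0.
have wT : interpolate w w' #|T| = w' by apply/ffunP => x; rewrite ffunE ltn_ord.
exists (map (interpolate w w') (iota 1 #|T|)); split.
- by rewrite -{1}w0 interpolate_path.
- by rewrite -{1}w0 interpolate_last wT.
- move=> u; rewrite -{1}w0 -map_cons => /mapP [k _ ->]; apply: mixP => x.
  by rewrite ffunE; case: ifP; [right | left].
Qed.

Lemma reconf_trans P w1 w2 w3 : reconf P w1 w2 -> reconf P w2 w3 -> reconf P w1 w3.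
Proof.
move=> [s1 [p1 l1 P1]] [s2 [p2 l2 P2]]; exists (s1 ++ s2); split.
- by rewrite cat_path p1 l1 p2.
- by rewrite last_cat l1.
- move=> u; rewrite -cat_cons mem_cat => /orP [/P1 // | us2].
  by apply: P2; rewrite inE us2 orbT.
Qed.

Lemma reconf_path (A : Type) (e : rel A) (conf : A -> {ffun T -> option bool}) P :
  reflexive e -> (forall a b, e a b -> reconf P (conf a) (conf b)) ->
  forall a s, path e a s -> reconf P (conf a) (conf (last a s)).
Proof.
move=> e_refl e_reconf a s; elim: s a => [|b s IH] a /=; first by move=> _; apply: e_reconf.
by case/andP => /e_reconf ab /IH; apply: reconf_trans.
Qed.

End Reconfiguration.

Lemma prob1_all (R : realFieldType) (Om : finType) (E : pred Om) :
  prob R E = 1 -> forall w, E w.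
Proof.
move=> /divr1_eq /eqP; rewrite eqr_nat => /eqP cardE w.
have /setP/(_ w) : [set w | E w] = setT by apply/eqP; rewrite eqEcard subsetT cardsT cardE leqnn.
by rewrite !inE => ->.
Qed.

Lemma all_prob1 (R : realFieldType) (Om : finType) (E : pred Om) (w0 : Om) :
  (forall w, E w) -> prob R E = 1.
Proof.
move=> allE; rewrite /prob.
have -> : [set w | E w] = setT by apply/setP => w; rewrite !inE allE.
by rewrite cardsT divff // pnatr_eq0 -lt0n; apply/card_gt0P; exists w0.
Qed.

Lemma code_length_gt0 (R : realFieldType) n l (Enc : bits n -> bits l) (rho : R) :
  (0 < n)%N -> is_code Enc rho -> (0 < l)%N.
Proof.
move=> n_gt0 [/andP [rho_gt0 _] dist_gt]; rewrite lt0n; apply/eqP => l0.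
have zeros_ones : zeros n != ones n.
  by apply/eqP => /ffunP /(_ (Ordinal n_gt0)); rewrite !ffunE.
(* For l = 0 every relative distance is 0 / 0, which is 0 in a field. *)
have := dist_gt _ _ zeros_ones; rewrite /reldist card_ord.
have -> : (l%:R : R) = 0 by rewrite l0.
by rewrite invr0 mulr0 ltNge (ltW rho_gt0).
Qed.

Lemma M_acc_embed l rM (MQ : bits rM -> seq 'I_l) (MD : bits rM -> seq bool -> bool)
  (f : bits l) r : M_acc MQ MD (embed f) r = M_acc_bin MQ MD f r.
Proof.
rewrite /M_acc /M_acc_bin (@eq_all _ _ predT) ?all_predT => [|i]; last by rewrite ffunE.
by congr MD; apply: eq_map => i; rewrite ffunE.
Qed.

Lemma embed_cat3 l p (f g : bits l) (pi : bits p) :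
  embed (cat3 f g pi) = cat3 (embed f) (embed g) (embed pi).
Proof. by apply/ffunP => [[[i|j]|k]]; rewrite !ffunE. Qed.

Lemma mixture_cat3 (V : Type) l p (F G F' G' : {ffun 'I_l -> V}) (P P' : {ffun 'I_p -> V})
  (u : {ffun pos l p -> V}) :
  mixture (cat3 F G P) (cat3 F' G' P') u ->
  exists F'' G'' P'', [/\ u = cat3 F'' G'' P'', mixture F F' F'', mixture G G' G''
                        & mixture P P' P''].
Proof.
move=> mix; exists [ffun i => u (inl (inl i))], [ffun j => u (inl (inr j))], [ffun k => u (inr k)].
split; first by apply/ffunP => [[[i|j]|k]]; rewrite !ffunE.
- by move=> i; rewrite ffunE; have := mix (inl (inl i)); rewrite !ffunE.
- by move=> j; rewrite ffunE; have := mix (inl (inr j)); rewrite !ffunE.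
- by move=> k; rewrite ffunE; have := mix (inr k); rewrite !ffunE.
Qed.

Lemma reconf_cat3 l p (Q : {ffun pos l p -> option bool} -> Prop)
  (F G F' G' : {ffun 'I_l -> option bool}) (P P' : {ffun 'I_p -> option bool}) :
  (forall F'' G'' P'', mixture F F' F'' -> mixture G G' G'' -> mixture P P' P'' ->
     Q (cat3 F'' G'' P'')) ->
  reconf Q (cat3 F G P) (cat3 F' G' P').
Proof.
move=> mixQ; apply: reconf_mixture => u /mixture_cat3 [F'' [G'' [P'' [-> mF mG mP]]]].
exact: mixQ.
Qed.

Section Verifier.

Variables (R : realFieldType) (n l p rM rV : nat).
Variables (S : bits n -> bits n) (Enc : bits n -> bits l) (Pi : bits n -> bits n -> bits p).
Variables (MQ : bits rM -> seq 'I_l) (MD : bits rM -> seq bool -> bool).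
Variables (VI : bits rV -> seq (pos l p)) (VD : bits rV -> seq bool -> bool).

Hypothesis l_gt0 : (0 < l)%N.
Hypothesis tester_complete : forall c, prob R (M_acc_bin MQ MD (Enc c)) = 1.
Hypothesis Pi_complete : is_pcpp_proof R S Enc VI VD Pi.

Let conf := {ffun pos l p -> option bool}.
Let accepted (w : conf) : Prop := V_prob R MQ MD VI VD w = 1.

Lemma honest_queries_accepted a b (w : conf) r :
  sgr_step S a b ->
  (forall x, x \in VI r -> w x = Some (cat3 (Enc a) (Enc b) (Pi a b) x)) ->
  all (fun x => is_pi x ==> (w x != None)) (VI r) && VD r (map (fun x => odflt false (w x)) (VI r)).
Proof.
move=> ab honest; rewrite (eq_in_all (a2 := predT)) ?all_predT => [|x /honest ->]; last first.
  by rewrite implybT.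
have -> : map (fun x => odflt false (w x)) (VI r) = map (cat3 (Enc a) (Enc b) (Pi a b)) (VI r).
  by apply/eq_in_map => x /honest ->.
exact: prob1_all (Pi_complete ab) r.
Qed.

Lemma V_prob_cat3 c F G P :
  F = embed (Enc c) \/ G = embed (Enc c) ->
  [\/ F = blank _, G = blank _
    | exists a b, [/\ sgr_step S a b, erasure_of (embed (Enc a)) F,
                      erasure_of (embed (Enc b)) G & P = embed (Pi a b)]] ->
  accepted (cat3 F G P).
Proof.
move=> codeword rest.
apply: (@all_prob1 R _ _ (zeros rM, zeros rM, (Ordinal l_gt0, Ordinal l_gt0, zeros rV))).
move=> [[r1 r2] [[i j] r3]] /=.
have -> : [ffun x => cat3 F G P (inl (inl x))] = F by apply/ffunP => x; rewrite !ffunE.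
have -> : [ffun x => cat3 F G P (inl (inr x))] = G by apply/ffunP => x; rewrite !ffunE.
have tester_accepts : M_acc MQ MD F r1 || M_acc MQ MD G r2.
  by case: codeword => ->; rewrite M_acc_embed (prob1_all (tester_complete c)) ?orbT.
rewrite -negb_or tester_accepts /=.
case: rest => [-> | -> | [a [b [ab Fa Gb ->]]]]; rewrite ?ffunE ?eqxx ?orbT //.
case: ifP => // _; case: ifP => // /negbT /hasPn unblanked.
apply: honest_queries_accepted ab _ => x /unblanked.
case: x => [[x|x]|x] /=; rewrite !ffunE //.
  by case: (Fa x) => ->; rewrite ?ffunE ?eqxx.
by case: (Gb x) => ->; rewrite ?ffunE ?eqxx.
Qed.

Lemma accepted_blank c F G P :
  F = embed (Enc c) /\ G = blank _ \/ F = blank _ /\ G = embed (Enc c) ->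
  accepted (cat3 F G P).
Proof.
by case=> -[FE GE]; apply: (V_prob_cat3 (c := c)); [left | apply: Or32 | right | apply: Or31].
Qed.

Lemma accepted_erasure a b F G :
  sgr_step S a b -> erasure_of (embed (Enc a)) F -> erasure_of (embed (Enc b)) G ->
  F = embed (Enc a) \/ G = embed (Enc b) ->
  accepted (cat3 F G (embed (Pi a b))).
Proof.
move=> ab Fa Gb codeword.
have [c codeword_c] : exists c, F = embed (Enc c) \/ G = embed (Enc c).
  by case: codeword; [exists a; left | exists b; right].
by apply: (V_prob_cat3 codeword_c); apply: Or33; exists a, b.
Qed.

Definition honest_conf a b : conf := embed (cat3 (Enc a) (Enc b) (Pi a b)).

Lemma reconf_edge_open a b : sgr_step S a b ->
  reconf accepted (honest_conf a a) (cat3 (embed (Enc a)) (embed (Enc b)) (embed (Pi a b))).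
Proof.
move=> ab; have aa : sgr_step S a a by rewrite /sgr_step eqxx.
rewrite /honest_conf embed_cat3.
apply: (reconf_trans (w2 := cat3 (embed (Enc a)) (blank _) (embed (Pi a a)))).
  apply: reconf_cat3 => F G P /mixture_id -> mG /mixture_id ->.
  apply: accepted_erasure aa (erasure_ofxx _) _ (or_introl erefl).
  exact: mixture_erasure (erasure_ofxx _) (erasure_of_blank _) mG.
apply: (reconf_trans (w2 := cat3 (embed (Enc a)) (blank _) (embed (Pi a b)))).
  apply: reconf_cat3 => F G P /mixture_id -> /mixture_id -> _.
  by apply: (accepted_blank (c := a)); left.
apply: reconf_cat3 => F G P /mixture_id -> mG /mixture_id ->.
apply: accepted_erasure ab (erasure_ofxx _) _ (or_introl erefl).
exact: mixture_erasure (erasure_of_blank _) (erasure_ofxx _) mG.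
Qed.

Lemma reconf_edge_close a b : sgr_step S a b ->
  reconf accepted (cat3 (embed (Enc a)) (embed (Enc b)) (embed (Pi a b))) (honest_conf b b).
Proof.
move=> ab; have bb : sgr_step S b b by rewrite /sgr_step eqxx.
rewrite /honest_conf embed_cat3.
apply: (reconf_trans (w2 := cat3 (blank _) (embed (Enc b)) (embed (Pi a b)))).
  apply: reconf_cat3 => F G P mF /mixture_id -> /mixture_id ->.
  apply: accepted_erasure ab _ (erasure_ofxx _) (or_intror erefl).
  exact: mixture_erasure (erasure_ofxx _) (erasure_of_blank _) mF.
apply: (reconf_trans (w2 := cat3 (blank _) (embed (Enc b)) (embed (Pi b b)))).
  apply: reconf_cat3 => F G P /mixture_id -> /mixture_id -> _.
  by apply: (accepted_blank (c := b)); right.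
apply: reconf_cat3 => F G P mF /mixture_id -> /mixture_id ->.
apply: accepted_erasure bb _ (erasure_ofxx _) (or_intror erefl).
exact: mixture_erasure (erasure_of_blank _) (erasure_ofxx _) mF.
Qed.

Lemma reconf_edge a b : sgr_step S a b -> reconf accepted (honest_conf a a) (honest_conf b b).
Proof. by move=> ab; apply: reconf_trans (reconf_edge_open ab) (reconf_edge_close ab). Qed.

End Verifier.

Theorem mainTheorem3 (R : realFieldType) (n l p q rM rV : nat)
  (S : bits n -> bits n) (Enc : bits n -> bits l) (rho kappa s_ckt : R)
  (MQ : bits rM -> seq 'I_l) (MD : bits rM -> seq bool -> bool)
  (VI : bits rV -> seq (pos l p)) (VD : bits rV -> seq bool -> bool)
  (Pi : bits n -> bits n -> bits p) :
  (0 < n)%N ->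
  S (ones n) = ones n ->
  SGR_yes S ->
  is_code Enc rho ->
  is_local_tester Enc kappa MQ MD ->
  is_smooth_pcpp q S Enc rho s_ckt VI VD ->
  is_pcpp_proof R S Enc VI VD Pi ->
  exists sigma : seq {ffun pos l p -> option bool},
    [/\ path (fun a b => adj a b) (sigma_start Enc Pi) sigma,
        last (sigma_start Enc Pi) sigma = sigma_goal Enc Pi
      & forall w, w \in sigma_start Enc Pi :: sigma -> V_prob R MQ MD VI VD w = 1].
Proof.
move=> n_gt0 _ [s /andP [s_path /eqP s_last]] code [_ [tester_complete _]] _ Pi_complete.
have l_gt0 := code_length_gt0 n_gt0 code.
have step_refl : reflexive (sgr_step S) by move=> a; rewrite /sgr_step eqxx.
have := reconf_path step_refl (reconf_edge l_gt0 tester_complete Pi_complete) s_path.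
by rewrite s_last.
Qed.
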